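(* Consider the DI-VKECM scheme described below and the following modified cloning attack on it: (a) a uniformly random message $M\in\{0,1\}^\lambda$ is encrypted with $\mathsf{Enc}$, except that the receiver is never given the classical register $C$; (b) an arbitrary channel distributes the receiver's state between Bob and Charlie; (c) $\mathsf{KeyRel}(K_{\mathrm{priv}})$ is run independently for Bob and for Charlie, where for Bob the string $\widetilde X$ produced is called $Y$ and the string $\widetilde A$ produced is called $\widetilde A^{\mathrm B}$, and for Charlie these are called $Z$ and $\widetilde A^{\mathrm C}$; Bob receives only $Y$ (not $R\oplus\widetilde A^{\mathrm B}$ nor $\mathtt{syn}(\widetilde A^{\mathrm B})$) and Charlie receives only $Z$; (d) Bob outputs a guess $G^{\mathrm B}$ of $\widetilde A^{\mathrm B}$ and Charlie a guess $G^{\mathrm C}$ of $\widetilde A^{\mathrm C}$. Let $\mathcal{T}=\{i\in[l]: Y_i=Z_i=X_i+2\}$ (the instances where neither received $\perp$), and for a string $W$ let $W_{\mathcal T}$ be its restriction to $\mathcal T$. If there is no leakage between the client's and receiver's devices during $\mathsf{Enc}$ and none between Bob's and Charlie's devices after they receive their keys, then \[\Pr\left[F=\text{accept}\wedge\widetilde A^{\mathrm B}_{\mathcal T}=G^{\mathrm B}_{\mathcal T}\wedge\widetilde A^{\mathrm C}_{\mathcal T}=G^{\mathrm C}_{\mathcal T}\right]\le 2^{-\kappa\delta_{\gamma,\alpha}^3\alpha^4 l}.\]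
   Context: $\omega^*(\mathrm{CHSH})=\frac12(1+\frac1{\sqrt2})$. $\mathrm{CLONE}_{\gamma,\alpha}$: Alice and Barlie share an entangled state; round 1: Alice gets uniform $x\in\{0,1\}$, Barlie independently gets $u\in\{0,1,\mathrm{keep}\}$ w.p. $\gamma/2,\gamma/2,1-\gamma$, they output bits $a,s$; Barlie distributes his registers to non-communicating Bob and Charlie; round 2: Bob gets $y$, Charlie gets $z$, each independently $\perp$ w.p. $\alpha$ and $x$ otherwise; they output bits $b,c$; win iff ($u\ne\mathrm{keep}$ and $a\oplus s=xu$) or ($u=\mathrm{keep}$ and ($y=\perp$ or $z=\perp$ or $b=c=a$)). $\delta_{\gamma,\alpha}>0$ satisfies $\omega^*(\mathrm{CLONE}_{\gamma,\alpha})\le(1-\gamma)+\gamma\omega^*(\mathrm{CHSH})-\delta_{\gamma,\alpha}$, and $\kappa>0$ is an absolute constant such that the quantum probability of winning at least $((1-\gamma)+\gamma\omega^*(\mathrm{CHSH})-\delta_{\gamma,\alpha}/2)l$ of $l$ parallel copies of $\mathrm{CLONE}_{\gamma,\alpha}$ is at most $2^{-\kappa\delta_{\gamma,\alpha}^3\alpha^4l}$. Devices are untrusted: client and receiver devices share an arbitrary quantum state on a bipartite space, each measuring its own factor; client's device takes inputs in $\{0,1\}^l$, receiver's in $\{0,1,2,3,\perp\}^l$; both output strings in $\{0,1\}^l$. Scheme (parameters $\gamma,\alpha\in(0,1)$, syndrome function $\mathtt{syn}$). $\mathsf{Enc}(1^\lambda,m)$: $l=\lambda$; client samples uniform $X\in\{0,1\}^l$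 and independent $U_i\in\{\mathrm{keep},0,1\}$ w.p. $1-\gamma,\gamma/2,\gamma/2$; inputs $X$ into its device, gets $A$; sends $U$ to the receiver, who returns a string $S$ (honestly: device output on input $U$ with keep read as $\perp$); client sets $F=\text{accept}$ iff $|\{i:U_i\ne\mathrm{keep},A_i\oplus S_i\ne X_iU_i\}|\le(\gamma(1-\omega^*(\mathrm{CHSH}))+\delta_{\gamma,\alpha}/2)l$; if accept, samples uniform $R\in\{0,1\}^\lambda$ and sends $C=m\oplus R$, else sends a uniform independent $C$. Private key $(X,U,A,R)$. $\mathsf{KeyRel}(X,U,A,R)$: sample $\widetilde X_i=\perp$ w.p. $\alpha$ independently, else $\widetilde X_i=X_i+2$; set $\widetilde A_i=0$ if $U_i\ne\mathrm{keep}$ or $\widetilde X_i=\perp$, else $\widetilde A_i=A_i$; output $(R\oplus\widetilde A,\mathtt{syn}(\widetilde A),\widetilde X)$. *)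

From HB Require Import structures.
From mathcomp Require Import all_boot all_order all_algebra.
From mathcomp Require Import complex mxtens.
From mathcomp Require Import reals exp.

Set Implicit Arguments.
Unset Strict Implicit.
Unset Printing Implicit Defensive.

Import Order.TTheory GRing.Theory Num.Theory.
Local Open Scope ring_scope.

Section QM.
Variable R : realType.
Local Notation C := R[i].

Definition adjmx m n (A : 'M[C]_(m, n)) : 'M[C]_(n, m) := (map_mx conjc A)^T.

Definition psd n (A : 'M[C]_n) : Prop :=
  adjmx A = A /\ forall v : 'cV[C]_n, 0 <= (adjmx v *m A *m v) 0 0.

Definition density n (rho : 'M[C]_n) : Prop := psd rho /\ \tr rho = 1.

Definition povm (O : finType) n (M : O -> 'M[C]_n) : Prop :=
  (forall o, psd (M o)) /\ \sum_(o : O) M o = 1%:M.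
End QM.

(** Bit strings of length l, and the alphabet {0,1,keep} with None = keep. *)
Notation bits l := {ffun 'I_l -> bool}.
Notation ustr l := {ffun 'I_l -> option bool}.

(** A general quantum strategy for the two-round, three-party setting
    (Alice/client device; Barlie/receiver who, on input u, outputs s and
    distributes his registers to Bob and Charlie via an arbitrary quantum
    instrument, given by Kraus operators; then Bob and Charlie measure
    separately).  Tensor-product structure = no leakage. *)
Record strategy (R : realType) (l : nat) (I : finType) := Strategy {
  dA : nat; dB : nat; dBo : nat; dCh : nat; nK : nat;
  st_rho : 'M[R[i]]_(dA * dB);
  st_A : bits l -> bits l -> 'M[R[i]]_dA;          (* input x, outcome a *)
  st_K : ustr l -> bits l -> 'I_nK -> 'M[R[i]]_(dBo * dCh, dB);
                                                    (* input u, outcome s *)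
  st_Bob : {ffun 'I_l -> I} -> bits l -> 'M[R[i]]_dBo;
  st_Charlie : {ffun 'I_l -> I} -> bits l -> 'M[R[i]]_dCh
}.
Arguments dA {R l I} s.
Arguments dB {R l I} s.
Arguments dBo {R l I} s.
Arguments dCh {R l I} s.
Arguments nK {R l I} s.
Arguments st_rho {R l I} s.
Arguments st_A {R l I} s _ _.
Arguments st_K {R l I} s _ _ _.
Arguments st_Bob {R l I} s _ _.
Arguments st_Charlie {R l I} s _ _.

Section Strat.
Variables (R : realType) (l : nat) (I : finType) (S : strategy R l I).
Local Open Scope ring_scope.

Definition valid_strategy : Prop :=
  [/\ density (st_rho S),
      (forall x, povm (st_A S x)),
      (forall u, \sum_(s : bits l) \sum_(k < nK S)
                   adjmx (st_K S u s k) *m st_K S u s k = 1%:M),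
      (forall y, povm (st_Bob S y)) &
      (forall z, povm (st_Charlie S z))].

Definition post_state (u : ustr l) (s : bits l) :
  'M[R[i]]_(dA S * (dBo S * dCh S)) :=
  \sum_(k < nK S)
     (1%:M *t st_K S u s k) *m st_rho S *m adjmx (1%:M *t st_K S u s k).

Definition jointp (x : bits l) (u : ustr l) (y z : {ffun 'I_l -> I})
    (a s b c : bits l) : R :=
  @complex.Re R (\tr ((st_A S x a *t (st_Bob S y b *t st_Charlie S z c)) *m post_state u s)).
End Strat.

Section Games.
Variable R : realType.
Local Open Scope ring_scope.

Definition omega_CHSH : R := (1 + (Num.sqrt (2 : R))^-1) / 2.

Definition pX (l : nat) (x : bits l) : R := (2 ^+ l)^-1.

Definition pU (gamma : R) (l : nat) (u : ustr l) : R :=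
  \prod_(i < l) (if u i is Some _ then gamma / 2 else 1 - gamma).

Definition xu l (x : bits l) (u : ustr l) (i : 'I_l) : bool :=
  if u i is Some b then x i && b else false.

(** Bob/Charlie input: None = perp, Some x_i otherwise *)
Definition pClone (alpha : R) l (x : bits l) (y : {ffun 'I_l -> option bool}) : R :=
  \prod_(i < l) (if y i is Some b then (if b == x i then 1 - alpha else 0)
                 else alpha).

Definition clone_win_i l (x : bits l) (u : ustr l)
  (y z : {ffun 'I_l -> option bool}) (a s b c : bits l) (i : 'I_l) : bool :=
  if u i is Some _ then (a i (+) s i) == xu x u i
  else [|| y i == None, z i == None | (b i == a i) && (c i == a i)].

Definition clone_expect l (gamma alpha : R)
  (S : strategy R l (option bool))
  (f : bits l -> ustr l -> {ffun 'I_l -> option bool} ->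
       {ffun 'I_l -> option bool} -> bits l -> bits l -> bits l -> bits l -> bool) : R :=
  \sum_(x : bits l) \sum_(u : ustr l)
  \sum_(y : {ffun 'I_l -> option bool}) \sum_(z : {ffun 'I_l -> option bool})
  \sum_(a : bits l) \sum_(s : bits l) \sum_(b : bits l) \sum_(c : bits l)
    pX x * pU gamma u * pClone alpha x y * pClone alpha x z
    * jointp S x u y z a s b c * (f x u y z a s b c)%:R.

Definition clone_win_prob (gamma alpha : R) (S : strategy R 1 (option bool)) : R :=
  clone_expect gamma alpha S
    (fun x u y z a s b c => clone_win_i x u y z a s b c ord0).

Definition clone_par_prob l (gamma alpha t : R) (S : strategy R l (option bool)) : R :=
  clone_expect gamma alpha S
    (fun x u y z a s b c =>
       t * l%:R <= #|[set i | clone_win_i x u y z a s b c i]|%:R).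

(** receiver alphabet {0,1,2,3,perp}: None = perp, Some k = k *)
Definition plus2 (b : bool) : 'I_4 := inord (b + 2).

(** KeyRel's Xtilde: perp w.p. alpha, else X_i + 2, independently *)
Definition pKey (alpha : R) l (x : bits l) (y : {ffun 'I_l -> option 'I_4}) : R :=
  \prod_(i < l) (if y i is Some k then (if k == plus2 (x i) then 1 - alpha else 0)
                 else alpha).

Definition Atilde l (u : ustr l) (y : {ffun 'I_l -> option 'I_4}) (a : bits l) : bits l :=
  [ffun i => if (u i != None) || (y i == None) then false else a i].

Definition accept l (gamma delta : R) (x : bits l) (u : ustr l) (a s : bits l) : bool :=
  #|[set i | (u i != None) && ((a i (+) s i) != xu x u i)]|%:R
    <= (gamma * (1 - omega_CHSH) + delta / 2) * l%:R.

Definition Tset l (x : bits l) (y z : {ffun 'I_l -> option 'I_4}) : {set 'I_l} :=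
  [set i | (y i == Some (plus2 (x i))) && (z i == Some (plus2 (x i)))].

Definition eq_on l (T : {set 'I_l}) (w w' : bits l) : bool :=
  [forall i in T, w i == w' i].

(** Pr[F = accept /\ AtildeB_T = GB_T /\ AtildeC_T = GC_T] in the attack:
    x = X, u = U, y = Y, z = Z, a = A, s = S, gb = G^B, gc = G^C. *)
Definition attack_prob l (gamma alpha delta : R)
  (S : strategy R l (option 'I_4)) : R :=
  \sum_(x : bits l) \sum_(u : ustr l)
  \sum_(y : {ffun 'I_l -> option 'I_4}) \sum_(z : {ffun 'I_l -> option 'I_4})
  \sum_(a : bits l) \sum_(s : bits l) \sum_(gb : bits l) \sum_(gc : bits l)
    pX x * pU gamma u * pKey alpha x y * pKey alpha x z
    * jointp S x u y z a s gb gc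
    * [&& accept gamma delta x u a s,
          eq_on (Tset x y z) (Atilde u y a) gb
        & eq_on (Tset x y z) (Atilde u z a) gc]%:R.
End Games.
Arguments omega_CHSH {R}.

From mathcomp Require Import all_boot all_order all_algebra.
From mathcomp Require Import complex mxtens spectral.
From mathcomp Require Import reals exp.
From mathcomp Require Import ring.
Import Order.TTheory GRing.Theory Num.Theory.
Local Open Scope ring_scope.
Set Implicit Arguments.
Unset Strict Implicit.

(* Bob's and Charlie's keys in the attack take values in {perp, 2, 3}, and
   mapping b + 2 to b turns them into inputs of the game CLONE: the attack is
   a strategy for l parallel copies of CLONE whose key distribution is exactly
   that of the game's inputs.  On every instance either U_i <> keep, where the
   client's acceptance test bounds the number of CHSH-type losses, or
   U_i = keep, where the copy is won as soon as someone receives perp or both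
   guess A_i correctly on T.  So an accepted, successful attack wins at least
   ((1-gamma) + gamma omega*(CHSH) - delta/2) l copies, and the parallel
   repetition bound applies.  The only analytic input is that the outcome
   probabilities of a valid strategy are nonnegative. *)

Section Positivity.
Variable R : realType.
Local Notation C := R[i].

Lemma adjmxE m n (A : 'M[C]_(m, n)) : adjmx A = map_mx Num.conj A^T.
Proof. by rewrite /adjmx map_trmx. Qed.

Lemma adjmxM m n p (A : 'M[C]_(m, n)) (B : 'M[C]_(n, p)) :
  adjmx (A *m B) = adjmx B *m adjmx A.
Proof. by rewrite /adjmx map_mxM trmx_mul. Qed.

Lemma adjmxK m n (A : 'M[C]_(m, n)) : adjmx (adjmx A) = A.
Proof. by apply/matrixP=> i j; rewrite !mxE conjcK. Qed.

Lemma adjmx_tens m n p q (A : 'M[C]_(m, n)) (B : 'M[C]_(p, q)) :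
  adjmx (A *t B) = adjmx A *t adjmx B.
Proof. by apply/matrixP=> i j; rewrite !mxE /= rmorphM. Qed.

Lemma adjmx_diag n (d : 'rV[C]_n) :
  adjmx (diag_mx d) = diag_mx (map_mx Num.conj d).
Proof.
by apply/matrixP=> i k; rewrite !mxE rmorphMn /= eq_sym; case: eqP => [->|].
Qed.

(* Spectral theorem: A = P^* diag(d) P with P unitary and d >= 0, so that
   B = diag(sqrt d) P works. *)
Lemma psd_gram n (A : 'M[C]_n) : psd A -> exists B : 'M[C]_n, A = adjmx B *m B.
Proof.
move=> [hermA posA].
have nA : A \is normalmx by apply/normalmxP; rewrite -adjmxE hermA.
have := orthomx_spectralP nA.
set P := spectralmx A; set d := spectral_diag A => eA.
have uP : P \is unitarymx := spectral_unitarymx A.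
have iP : invmx P = map_mx Num.conj P^T by rewrite invmx_unitary.
have d_ge0 j : 0 <= d 0 j.
  have := posA (col j (map_mx Num.conj P^T)).
  have -> : adjmx (col j (map_mx Num.conj P^T)) = row j P.
    by apply/matrixP=> a b; rewrite !mxE conjcK.
  rewrite rowE colE eA iP !mulmxA !(mulmxtVK _ uP) -mulmxA mul_diag_mx -rowE.
  by rewrite !mxE eqxx mulr1.
exists (diag_mx (map_mx sqrtC d) *m P).
rewrite adjmxM adjmx_diag [adjmx P]adjmxE mulmxA.
rewrite -[_ *m diag_mx _ *m diag_mx _]mulmxA mulmx_diag {1}eA iP.
congr (_ *m diag_mx _ *m _); apply/rowP=> j.
by rewrite !mxE geC0_conj ?sqrtC_ge0 // -expr2 sqrtCK.
Qed.

Lemma mxtrace_gram_ge0 m n (M : 'M[C]_(m, n)) : 0 <= \tr (adjmx M *m M).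
Proof.
apply: sumr_ge0 => i _; rewrite !mxE; apply: sumr_ge0 => k _.
by rewrite !mxE mulrC mul_conjC_ge0.
Qed.

Lemma mxtrace_gram_conj_ge0 p q r (G : 'M[C]_(p, q)) (K : 'M[C]_(q, r))
    (E : 'M[C]_r) :
  0 <= \tr (adjmx G *m G *m (K *m (adjmx E *m E) *m adjmx K)).
Proof.
rewrite !mulmxA -[_ *m E *m _]mulmxA mxtrace_mulC.
have := mxtrace_gram_ge0 (G *m K *m adjmx E).
by rewrite !adjmxM adjmxK !mulmxA.
Qed.

Lemma Re_ge0 (z : C) : 0 <= z -> 0 <= complex.Re z.
Proof. by case: z => a b; rewrite lecE => /andP[]. Qed.

Lemma jointp_ge0 l (I : finType) (S : strategy R l I) x u y z a s b c :
  valid_strategy S -> 0 <= jointp S x u y z a s b c.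
Proof.
case=> [[rhoP _] AP _ BobP CharlieP]; rewrite /jointp /post_state.
have [E ->] := psd_gram rhoP.
have [GA ->] := psd_gram ((AP x).1 a).
have [GB ->] := psd_gram ((BobP y).1 b).
have [GC ->] := psd_gram ((CharlieP z).1 c).
rewrite -!tensmx_mul -!adjmx_tens.
apply: Re_ge0; rewrite mulmx_sumr linear_sum; apply: sumr_ge0 => k _.
exact: mxtrace_gram_conj_ge0.
Qed.

End Positivity.

Lemma sum_supported_image (R : nmodType) (A B : finType) (f : A -> B)
    (g : B -> A) (F : B -> R) :
  cancel f g -> (forall b, b != f (g b) -> F b = 0) ->
  \sum_b F b = \sum_a F (f a).
Proof.
move=> fK F0; rewrite (bigID (fun b => b == f (g b))) /=.
rewrite [X in _ + X]big1 ?addr0 // (reindex_onto f g) /=; last by move=> b /eqP.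
by apply: eq_bigl => a; rewrite fK !eqxx.
Qed.

Section Keys.
Variable R : realType.

Lemma plus2_inj : injective plus2.
Proof. by move=> [] [] // /(congr1 val); rewrite /= !inordK. Qed.

Definition keystr l (y : {ffun 'I_l -> option bool}) :
  {ffun 'I_l -> option 'I_4} :=
  [ffun i => omap plus2 (y i)].

Definition clonestr l (y : {ffun 'I_l -> option 'I_4}) :
  {ffun 'I_l -> option bool} :=
  [ffun i => omap (fun k : 'I_4 => k == plus2 true) (y i)].

Lemma keystrK l : cancel (@keystr l) (@clonestr l).
Proof.
move=> y; apply/ffunP=> i; rewrite !ffunE; case: (y i) => [b|] //=.
by rewrite (inj_eq plus2_inj); case: b.
Qed.

Lemma pKey_keystr (alpha : R) l (x : bits l) (y : {ffun 'I_l -> option bool}) :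
  pKey alpha x (keystr y) = pClone alpha x y.
Proof.
apply: eq_bigr => i _; rewrite ffunE; case: (y i) => [b|] //=.
by rewrite (inj_eq plus2_inj).
Qed.

Lemma pKey_eq0 (alpha : R) l (x : bits l) (y : {ffun 'I_l -> option 'I_4}) :
  y != keystr (clonestr y) -> pKey alpha x y = 0.
Proof.
move=> /eqP y_neq; have /existsP[i yi] : [exists i, y i != keystr (clonestr y) i].
  by apply: contraT => /existsPn yE; case: y_neq; apply/ffunP => i; apply/eqP/negPn.
rewrite /pKey (bigD1 i) //=; move: yi; rewrite !ffunE; case: (y i) => [k|] //= k_neq.
case: (k =P plus2 (x i)) k_neq => [-> | _]; last by rewrite mul0r.
by rewrite (inj_eq plus2_inj) eqb_id eqxx.
Qed.

Definition consistent l (x : bits l) (y : {ffun 'I_l -> option bool}) : bool :=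
  [forall i, (y i == None) || (y i == Some (x i))].

Lemma pClone_eq0 (alpha : R) l (x : bits l) (y : {ffun 'I_l -> option bool}) :
  ~~ consistent x y -> pClone alpha x y = 0.
Proof.
case/forallPn => i; rewrite negb_or => /andP[].
rewrite /pClone (bigD1 i) //=; case: (y i) => [b|] //= _ bx.
by rewrite ifN ?mul0r.
Qed.

Lemma pX_ge0 l (x : bits l) : 0 <= pX R x.
Proof. by rewrite invr_ge0 exprn_ge0. Qed.

Lemma pU_ge0 (gamma : R) l (u : ustr l) : 0 <= gamma <= 1 -> 0 <= pU gamma u.
Proof.
case/andP=> g0 g1; apply: prodr_ge0 => i _.
by case: (u i) => [b|]; rewrite ?divr_ge0 ?subr_ge0.
Qed.

Lemma pClone_ge0 (alpha : R) l (x : bits l) y :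
  0 <= alpha <= 1 -> 0 <= pClone alpha x y.
Proof.
case/andP=> a0 a1; apply: prodr_ge0 => i _; case: (y i) => [b|] //.
by case: eqP; rewrite ?subr_ge0.
Qed.

End Keys.

Section Attack.
Variables (R : realType) (l : nat).

Definition clone_strategy (S : strategy R l (option 'I_4)) :
  strategy R l (option bool) :=
  Strategy (st_rho S) (st_A S) (st_K S)
    (fun y => st_Bob S (keystr y)) (fun z => st_Charlie S (keystr z)).

Lemma clone_strategy_valid S : valid_strategy S -> valid_strategy (clone_strategy S).
Proof.
by case=> rhoP AP KP BobP CharlieP; split => // y; [apply: BobP | apply: CharlieP].
Qed.

Definition attack_success (gamma delta : R) x u (y z : {ffun 'I_l -> option bool})
    a s gb gc : bool :=
  [&& accept gamma delta x u a s,
      eq_on (Tset x (keystr y) (keystr z)) (Atilde u (keystr y) a) gb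
    & eq_on (Tset x (keystr y) (keystr z)) (Atilde u (keystr z) a) gc].

Lemma attack_probE gamma alpha delta S :
  attack_prob gamma alpha delta S =
  clone_expect gamma alpha (clone_strategy S) (attack_success gamma delta).
Proof.
apply: eq_bigr => x _; apply: eq_bigr => u _.
rewrite (sum_supported_image (@keystrK l)); last first.
  move=> y /(pKey_eq0 alpha x) y0; do 5 (apply: big1 => ? _).
  by rewrite y0 !(mulr0, mul0r).
apply: eq_bigr => y _; rewrite (sum_supported_image (@keystrK l)); last first.
  move=> z /(pKey_eq0 alpha x) z0; do 4 (apply: big1 => ? _).
  by rewrite z0 !(mulr0, mul0r).
apply: eq_bigr => z _; do 4 (apply: eq_bigr => ? _).
by rewrite !pKey_keystr.
Qed.

Lemma clone_expect_le_event gamma alpha (S : strategy R l (option bool))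
    (f g : bits l -> ustr l -> {ffun 'I_l -> option bool} ->
       {ffun 'I_l -> option bool} -> bits l -> bits l -> bits l -> bits l -> bool) :
  valid_strategy S -> 0 <= gamma <= 1 -> 0 <= alpha <= 1 ->
  (forall x u y z a s b c, consistent x y -> consistent x z ->
     f x u y z a s b c -> g x u y z a s b c) ->
  clone_expect gamma alpha S f <= clone_expect gamma alpha S g.
Proof.
move=> SP g01 a01 fg.
apply: ler_sum => x _; apply: ler_sum => u _; apply: ler_sum => y _.
apply: ler_sum => z _; apply: ler_sum => a _; apply: ler_sum => s _.
apply: ler_sum => b _; apply: ler_sum => c _.
have [yx|/(pClone_eq0 alpha)->] := boolP (consistent x y); last first.
  by rewrite !(mulr0, mul0r).
have [zx|/(pClone_eq0 alpha)->] := boolP (consistent x z); last first.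
  by rewrite !(mulr0, mul0r).
rewrite ler_wpM2l ?mulr_ge0 ?pX_ge0 ?pU_ge0 ?pClone_ge0 ?jointp_ge0 //.
by rewrite ler_nat; case: (f x u y z a s b c) (fg x u y z a s b c yx zx) => // ->.
Qed.

Lemma clone_win_keep (x : bits l) (u : ustr l) (y z : {ffun 'I_l -> option bool})
    (a s b c : bits l) (i : 'I_l) :
  consistent x y -> consistent x z -> u i = None ->
  eq_on (Tset x (keystr y) (keystr z)) (Atilde u (keystr y) a) b ->
  eq_on (Tset x (keystr y) (keystr z)) (Atilde u (keystr z) a) c ->
  clone_win_i x u y z a s b c i.
Proof.
move=> /forallP/(_ i) yx /forallP/(_ i) zx ui /forall_inP bP /forall_inP cP.
rewrite /clone_win_i ui.
case/orP: yx => [/eqP -> // | /eqP yi]; case/orP: zx => [/eqP -> | /eqP zi].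
  by rewrite eqxx orbT.
have iT : i \in Tset x (keystr y) (keystr z) by rewrite inE !ffunE yi zi !eqxx.
move: (bP i iT) (cP i iT); rewrite !ffunE ui yi zi /= => /eqP <- /eqP <-.
by rewrite eqxx.
Qed.

Lemma attack_success_clone_wins gamma delta (x : bits l) (u : ustr l)
    (y z : {ffun 'I_l -> option bool}) (a s b c : bits l) :
  consistent x y -> consistent x z -> attack_success gamma delta x u y z a s b c ->
  ((1 - gamma) + gamma * omega_CHSH - delta / 2) * l%:R
    <= #|[set i | clone_win_i x u y z a s b c i]|%:R.
Proof.
move=> yx zx /and3P[acc bP cP].
set L := [set i | (u i != None) && ((a i (+) s i) != xu x u i)].
have winL : ~: L \subset [set i | clone_win_i x u y z a s b c i].
  apply/subsetP => i; rewrite !inE negb_and !negbK.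
  case ui: (u i) => [b'|] /=; first by rewrite /clone_win_i ui.
  by move=> _; apply: clone_win_keep.
apply: le_trans (_ : _ <= #|~: L|%:R) _; last by rewrite ler_nat subset_leq_card.
have -> : (#|~: L|%:R : R) = l%:R - #|L|%:R.
  by apply/eqP; rewrite eq_sym subr_eq -natrD addnC cardsC card_ord.
rewrite [leLHS](_ : _ = l%:R - (gamma * (1 - omega_CHSH) + delta / 2) * l%:R).
  by rewrite lerD2l lerN2.
by ring.
Qed.

End Attack.

Unset Implicit Arguments.

Theorem lemma26 (R : realType) (gamma alpha delta kappa : R) (l : nat)
  (S : strategy R l (option 'I_4)) :
  0 < gamma < 1 -> 0 < alpha < 1 -> 0 < delta -> 0 < kappa ->
  (* delta_{gamma,alpha}: omega^*(CLONE) <= (1-gamma) + gamma omega^*(CHSH) - delta *)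
  (forall S1 : strategy R 1 (option bool), valid_strategy S1 ->
     clone_win_prob gamma alpha S1 <= (1 - gamma) + gamma * omega_CHSH - delta) ->
  (* kappa: parallel repetition bound for CLONE *)
  (forall (l' : nat) (S' : strategy R l' (option bool)), valid_strategy S' ->
     clone_par_prob gamma alpha ((1 - gamma) + gamma * omega_CHSH - delta / 2) S'
       <= powR 2 (- (kappa * delta ^+ 3 * alpha ^+ 4 * l'%:R))) ->
  valid_strategy S ->
  attack_prob gamma alpha delta S <= powR 2 (- (kappa * delta ^+ 3 * alpha ^+ 4 * l%:R)).
Proof.
move=> /andP[g0 g1] /andP[a0 a1] _ _ _ par_bound SP.
have SP' := clone_strategy_valid SP.
apply: le_trans (par_bound l _ SP'); rewrite attack_probE.
apply: clone_expect_le_event; rewrite ?ltW //.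
exact: attack_success_clone_wins.
Qed.
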